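(* With $m_1,m_2$, $r$, $d$, ${\mathfrak p}$, $g$ and $k_{m_1,m_2}$ as below, define $F({\mathfrak z})=\int_{-1}^{{\mathfrak z}} g(t,k_{m_1,m_2})\,{\mathfrak p}(t)\,dt$. Then $F$ is smooth on $[-1,1]$ and satisfies: $F({\mathfrak z})>0$ for $-1<{\mathfrak z}<1$; $F(\pm1)=0$; $F'(-1)=2{\mathfrak p}(-1)/m_2$ and $F'(1)=-2{\mathfrak p}(1)/m_1$; and $\bigl(F'({\mathfrak z})/{\mathfrak p}({\mathfrak z})\bigr)'<0$ for all ${\mathfrak z}\in[-1,1]$.
   Context: $m_1,m_2$ are positive integers, $r$ is real with $0<|r|<1$, $d$ is a positive integer and ${\mathfrak p}(t)=(1+rt)^d$. The function $g(t,k)$ is $2\,\frac{(\frac1{m_1}+\frac1{m_2})e^{-kt}-(\frac{e^k}{m_1}+\frac{e^{-k}}{m_2})}{e^k-e^{-k}}$ for $k\neq0$ and $\frac{1-t}{m_2}-\frac{1+t}{m_1}$ for $k=0$. $k_{m_1,m_2}$ is the unique real number with $\int_{-1}^1 g(t,k_{m_1,m_2}){\mathfrak p}(t)\,dt=0$. *)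

From Stdlib Require Import Reals Lra ClassicalEpsilon.
Open Scope R_scope.

(* Total Riemann integral: the value of RiemannInt when f is Riemann
   integrable on [a,b] (well defined by proof irrelevance of RiemannInt,
   lemma RiemannInt_P5); an unspecified real otherwise. *)
Definition RInt (f : R -> R) (a b : R) : R :=
  epsilon (inhabits 0)
    (fun l => exists pr : Riemann_integrable f a b, RiemannInt pr = l).

Definition pp (r : R) (d : nat) (t : R) : R := (1 + r * t) ^ d.

Definition g (m1 m2 : nat) (t k : R) : R :=
  if Req_EM_T k 0 then
    (1 - t) / INR m2 - (1 + t) / INR m1
  else
    2 * ((/ INR m1 + / INR m2) * exp (- k * t) - (exp k / INR m1 + exp (- k) / INR m2))
      / (exp k - exp (- k)).

Definition kk (m1 m2 : nat) (r : R) (d : nat) : R :=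
  epsilon (inhabits 0)
    (fun k => RInt (fun t => g m1 m2 t k * pp r d t) (-1) 1 = 0).

Definition FF (m1 m2 : nat) (r : R) (d : nat) (z : R) : R :=
  RInt (fun t => g m1 m2 t (kk m1 m2 r d) * pp r d t) (-1) z.

Definition smooth_on (f : R -> R) (a b : R) : Prop :=
  exists D : nat -> R -> R,
    D 0%nat = f /\
    forall (n : nat) (x : R), a <= x <= b -> derivable_pt_lim (D n) x (D (S n) x).

From Pilot Require Import Defs.
From Stdlib Require Import Reals Lra Psatz ClassicalEpsilon FunctionalExtensionality.
From Coquelicot Require Import Coquelicot.
Open Scope R_scope.

(* F' = g(., k) p with p > 0 on [-1, 1], and g(., k) is strictly decreasing (affine for
   k = 0, c e^(-k t) - c' with k c > 0 otherwise); together with F(-1) = F(1) = 0 this gives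
   positivity, the endpoint slopes and (F'/p)' = dg/dt < 0.  The real work is the existence
   of k_{m1,m2}, which FF picks by [epsilon].  Clearing the denominator of g,
   J(k) = int g(t,k) p(t) dt equals 2 N(k) / (e^k - e^(-k)) for k <> 0, where
   N(k) = int ((1/m1 + 1/m2) e^(-k t) - e^k/m1 - e^(-k)/m2) p(t) dt is smooth in k,
   vanishes at 0 and has N'(0) = J(0).  As int e^(-k t) p(t) dt <= 2^d e^|k| / |k|, N is
   negative for large |k|; so if J(0) <> 0, N changes sign on the side of 0 where it starts
   out positive, and that root of N is a root of J. *)

(* Coquelicot's lemmas leave equations typed in a normed-module carrier, where [ring] and
   [field] do not recognize [R]. *)
Ltac R_eq := match goal with |- ?x = ?y => change (@eq R x y) end.

Lemma RInt_continuous_eq (f : R -> R) (a b : R) :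
  (forall x, continuity_pt f x) -> Defs.RInt f a b = RInt f a b.
Proof.
  intros Hf.
  assert (pr : Riemann_integrable f a b).
  { destruct (Rle_dec a b).
    - apply continuity_implies_RiemannInt; auto.
    - apply RiemannInt_P1, continuity_implies_RiemannInt; auto; lra. }
  unfold Defs.RInt.
  destruct (epsilon_spec (inhabits 0)
    (fun l => exists pr : Riemann_integrable f a b, RiemannInt pr = l)) as [pr' <-].
  { exists (RiemannInt pr), pr; reflexivity. }
  symmetry; apply RInt_Reals.
Qed.

(* Stated with explicit derivatives so that closure under products is a plain induction. *)
Fixpoint derivable_n (n : nat) (f : R -> R) : Prop :=
  match n with
  | O => True
  | S n => exists f', (forall x, derivable_pt_lim f x (f' x)) /\ derivable_n n f'
  end.

Definition smooth (f : R -> R) : Prop := forall n, derivable_n n f.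

Lemma derivable_n_S n f : derivable_n (S n) f -> derivable_n n f.
Proof.
  revert f; induction n as [|n IH]; intros f [f' [Hf Hf']]; simpl; auto.
  exists f'; auto.
Qed.

Lemma derivable_n_plus n f g :
  derivable_n n f -> derivable_n n g -> derivable_n n (fun x => f x + g x).
Proof.
  revert f g; induction n as [|n IH]; intros f g; simpl; auto.
  intros [f' [Hf Hf']] [g' [Hg Hg']].
  exists (fun x => f' x + g' x); split; auto.
  intros x; apply (derivable_pt_lim_plus f g); auto.
Qed.

Lemma derivable_n_mult n f g :
  derivable_n n f -> derivable_n n g -> derivable_n n (fun x => f x * g x).
Proof.
  revert f g; induction n as [|n IH]; intros f g; simpl; auto.
  intros Hf Hg.
  pose proof (derivable_n_S n f Hf) as Hf0; pose proof (derivable_n_S n g Hg) as Hg0.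
  destruct Hf as [f' [Hf Hf']], Hg as [g' [Hg Hg']].
  exists (fun x => f' x * g x + f x * g' x); split.
  - intros x; apply (derivable_pt_lim_mult f g); auto.
  - apply derivable_n_plus; auto.
Qed.

Lemma derivable_n_const n c : derivable_n n (fun _ => c).
Proof.
  revert c; induction n; intros c; simpl; auto.
  exists (fun _ => 0); split; auto.
  intros; apply derivable_pt_lim_const.
Qed.

Lemma derivable_n_id n : derivable_n n (fun x => x).
Proof.
  destruct n; simpl; auto.
  exists (fun _ => 1); split; [intros; apply derivable_pt_lim_id | apply derivable_n_const].
Qed.

Lemma derivable_n_exp_scal n c : derivable_n n (fun x => exp (c * x)).
Proof.
  induction n; simpl; auto.
  exists (fun x => c * exp (c * x)); split.
  - intros x; apply is_derive_Reals; auto_derive; auto; ring.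
  - apply derivable_n_mult; auto using derivable_n_const.
Qed.

Lemma derivable_n_pow n f m : derivable_n n f -> derivable_n n (fun x => f x ^ m).
Proof.
  intros Hf; induction m; simpl.
  - apply derivable_n_const.
  - apply derivable_n_mult; auto.
Qed.

Lemma smooth_continuous f : smooth f -> forall x, continuous f x.
Proof.
  intros Hf x; destruct (Hf 1%nat) as [f' [Hf' _]].
  apply (ex_derive_continuous f); exists (f' x); apply is_derive_Reals; auto.
Qed.

Lemma smooth_continuity_pt f : smooth f -> forall x, continuity_pt f x.
Proof. intros Hf x; apply continuity_pt_filterlim, smooth_continuous, Hf. Qed.

Lemma smooth_Derive f : smooth f -> smooth (Derive f).
Proof.
  intros Hf n; destruct (Hf (S n)) as [f' [Hf' Hn]].
  replace (Derive f) with f'; auto.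
  apply functional_extensionality; intros y.
  symmetry; apply is_derive_unique, is_derive_Reals; auto.
Qed.

Lemma smooth_Derive_n n f : smooth f ->
  forall x, derivable_pt_lim (Derive_n f n) x (Derive_n f (S n) x).
Proof.
  revert f; induction n as [|n IH]; intros f Hf x.
  - destruct (Hf 1%nat) as [f' [Hf' _]].
    replace (Derive_n f 1 x) with (f' x); auto.
    symmetry; apply is_derive_unique, is_derive_Reals; auto.
  - assert (E : forall m, Derive_n f (S m) = Derive_n (Derive f) m).
    { intros m; apply functional_extensionality; intros y.
      replace (S m) with (m + 1)%nat by lia.
      rewrite <- (Derive_n_comp f m 1); reflexivity. }
    rewrite !E; apply IH, smooth_Derive; auto.
Qed.

Lemma pp_pos r d t : Rabs r < 1 -> -1 <= t <= 1 -> 0 < pp r d t.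
Proof.
  intros Hr Ht; unfold pp; apply pow_lt.
  destruct (Rabs_def2 _ _ Hr).
  destruct (Rle_lt_or_eq_dec (-1) t (proj1 Ht)) as [Ht'|<-]; [nra | lra].
Qed.

Lemma pp_le r d t : Rabs r < 1 -> -1 <= t <= 1 -> pp r d t <= 2 ^ d.
Proof.
  intros Hr Ht; unfold pp; apply pow_incr.
  destruct (Rabs_def2 _ _ Hr); split; nra.
Qed.

Lemma pp_smooth r d : smooth (pp r d).
Proof.
  intros n; apply (derivable_n_pow n (fun t => 1 + r * t)).
  apply derivable_n_plus; [apply derivable_n_const|].
  apply derivable_n_mult; [apply derivable_n_const | apply derivable_n_id].
Qed.

Lemma sinh_mul_pos k : k <> 0 -> 0 < k * (exp k - exp (- k)).
Proof.
  intros Hk; destruct (Rlt_or_le 0 k) as [Hp|Hn].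
  - pose proof (exp_increasing (- k) k ltac:(lra)); nra.
  - pose proof (exp_increasing k (- k) ltac:(lra)); nra.
Qed.

Lemma sinh_neq_0 k : k <> 0 -> exp k - exp (- k) <> 0.
Proof. intros Hk E; pose proof (sinh_mul_pos k Hk); rewrite E in *; lra. Qed.

(* [g] times [(exp k - exp (- k)) / 2]; unlike [g] it needs no case split at [k = 0]. *)
Definition gnum (m1 m2 : nat) (t k : R) : R :=
  (/ INR m1 + / INR m2) * exp (- k * t) - (exp k / INR m1 + exp (- k) / INR m2).

Lemma g_neq_0 m1 m2 t k : k <> 0 -> g m1 m2 t k = 2 * gnum m1 m2 t k / (exp k - exp (- k)).
Proof. intros Hk; unfold g; destruct (Req_EM_T k 0); [contradiction | reflexivity]. Qed.

Lemma g_0 m1 m2 t : g m1 m2 t 0 = (1 - t) / INR m2 - (1 + t) / INR m1.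
Proof. unfold g; destruct (Req_EM_T 0 0); [reflexivity | lra]. Qed.

Section Integrand.

Variables m1 m2 : nat.
Hypotheses (hm1 : (0 < m1)%nat) (hm2 : (0 < m2)%nat).

Let INR_m1_pos : 0 < INR m1. Proof. apply lt_0_INR; lia. Qed.
Let INR_m2_pos : 0 < INR m2. Proof. apply lt_0_INR; lia. Qed.

Lemma g_at_neg1 k : g m1 m2 (-1) k = 2 / INR m2.
Proof.
  destruct (Req_EM_T k 0) as [->|Hk].
  - rewrite g_0; field; lra.
  - rewrite g_neq_0 by auto; unfold gnum.
    replace (- k * -1) with k by ring.
    pose proof (sinh_neq_0 k Hk); field; lra.
Qed.

Lemma g_at_1 k : g m1 m2 1 k = - (2 / INR m1).
Proof.
  destruct (Req_EM_T k 0) as [->|Hk].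
  - rewrite g_0; field; lra.
  - rewrite g_neq_0 by auto; unfold gnum.
    replace (- k * 1) with (- k) by ring.
    pose proof (sinh_neq_0 k Hk); field; lra.
Qed.

Lemma gnum_smooth k : smooth (fun t => gnum m1 m2 t k).
Proof.
  intros n; unfold gnum.
  apply derivable_n_plus; [|apply derivable_n_const].
  apply derivable_n_mult; [apply derivable_n_const | apply derivable_n_exp_scal].
Qed.

Lemma g_smooth k : smooth (fun t => g m1 m2 t k).
Proof.
  intros n; destruct (Req_EM_T k 0) as [->|Hk].
  - replace (fun t => g m1 m2 t 0)
      with (fun t => (/ INR m2 - / INR m1) + (- / INR m2 - / INR m1) * t).
    + apply derivable_n_plus; [apply derivable_n_const|].
      apply derivable_n_mult; [apply derivable_n_const | apply derivable_n_id].
    + apply functional_extensionality; intros t; rewrite g_0; field; lra.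
  - replace (fun t => g m1 m2 t k)
      with (fun t => 2 / (exp k - exp (- k)) * gnum m1 m2 t k).
    + apply derivable_n_mult; [apply derivable_n_const | apply gnum_smooth].
    + apply functional_extensionality; intros t; rewrite g_neq_0 by auto.
      field; apply sinh_neq_0; auto.
Qed.

Lemma g_pp_smooth r d k : smooth (fun t => g m1 m2 t k * pp r d t).
Proof. intros n; apply derivable_n_mult; [apply g_smooth | apply pp_smooth]. Qed.

Lemma g_derive_neg k : exists dg : R -> R,
  (forall t, derivable_pt_lim (fun s => g m1 m2 s k) t (dg t)) /\ forall t, dg t < 0.
Proof.
  assert (Hab : 0 < / INR m1 + / INR m2)
    by (pose proof (Rinv_0_lt_compat _ INR_m1_pos); pose proof (Rinv_0_lt_compat _ INR_m2_pos); lra).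
  destruct (Req_EM_T k 0) as [->|Hk].
  - exists (fun _ => - (/ INR m1 + / INR m2)); split; [intros t | intros; lra].
    apply is_derive_Reals.
    apply (is_derive_ext (fun t => (1 - t) / INR m2 - (1 + t) / INR m1)).
    + intros; rewrite g_0; reflexivity.
    + auto_derive; [auto | field; lra].
  - set (D := exp k - exp (- k)).
    assert (HD : D <> 0) by apply sinh_neq_0, Hk.
    assert (HkD : 0 < k / D).
    { replace (k / D) with (k * D / (D * D)) by (field; auto).
      apply Rdiv_lt_0_compat; [apply sinh_mul_pos, Hk | nra]. }
    exists (fun t => - (2 * (/ INR m1 + / INR m2)) * (k / D) * exp (- k * t)); split.
    + intros t; apply is_derive_Reals.
      apply (is_derive_ext (fun t => 2 * gnum m1 m2 t k / D)).
      * intros; rewrite g_neq_0 by auto; reflexivity.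
      * unfold gnum; auto_derive; [auto | field; repeat split; auto; lra].
    + intros s; pose proof (exp_pos (- k * s)).
      assert (0 < 2 * (/ INR m1 + / INR m2) * (k / D) * exp (- k * s))
        by (apply Rmult_lt_0_compat; [apply Rmult_lt_0_compat|]; lra).
      lra.
Qed.

Lemma g_decreasing k t1 t2 : t1 < t2 -> g m1 m2 t2 k < g m1 m2 t1 k.
Proof.
  intros Ht; destruct (g_derive_neg k) as [dg [Hdg Hneg]].
  apply Ropp_lt_cancel.
  apply (incr_function (fun t => - g m1 m2 t k) m_infty p_infty (fun t => - dg t));
    simpl; auto.
  - intros t _ _; apply is_derive_Reals, derivable_pt_lim_opp, Hdg.
  - intros t _ _; specialize (Hneg t); lra.
Qed.

End Integrand.

Definition profile (m1 m2 : nat) (r : R) (d : nat) (k z : R) : R :=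
  RInt (fun t => g m1 m2 t k * pp r d t) (-1) z.

Lemma root_after_positive_slope (f : R -> R) (l K : R) :
  continuity f -> f 0 = 0 -> derivable_pt_lim f 0 l -> 0 < l ->
  (forall k, K <= k -> f k < 0) -> exists k, 0 < k /\ f k = 0.
Proof.
  intros Hc Hf0 Hd Hl Hneg.
  destruct (Hd l Hl) as [del Hdel].
  pose proof (cond_pos del) as Hdel0.
  set (h := del / 2).
  assert (Hh : 0 < h < del) by (unfold h; lra).
  assert (Hfh : 0 < f h).
  { specialize (Hdel h ltac:(apply Rgt_not_eq; lra) ltac:(rewrite Rabs_pos_eq; lra)).
    rewrite Rplus_0_l, Hf0, Rminus_0_r in Hdel.
    apply Rabs_def2 in Hdel.
    assert (0 < f h / h) by lra.
    replace (f h) with (f h / h * h) by (field; lra); nra. }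
  assert (HhK : h < K).
  { destruct (Rlt_or_le h K) as [|HKh]; auto; specialize (Hneg h HKh); lra. }
  destruct (IVT (fun k => - f k) h K) as [z [Hz Hfz]].
  - apply continuity_opp, Hc.
  - exact HhK.
  - lra.
  - specialize (Hneg K (Rle_refl K)); lra.
  - exists z; split; lra.
Qed.

Lemma RInt_exp_scal k : k <> 0 ->
  RInt (fun t => exp (- k * t)) (-1) 1 = (exp k - exp (- k)) / k.
Proof.
  intros Hk; apply is_RInt_unique.
  replace ((exp k - exp (- k)) / k) with (- exp (- k * 1) / k - - exp (- k * -1) / k)
    by (replace (- k * 1) with (- k) by ring; replace (- k * -1) with k by ring; field; auto).
  apply (is_RInt_derive (fun t => - exp (- k * t) / k)).
  - intros t _; auto_derive; [auto | field; auto].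
  - intros t _; apply continuity_pt_filterlim.
    apply derivable_continuous_pt; reg.
Qed.

Lemma sinh_div_le k : k <> 0 -> (exp k - exp (- k)) / k <= exp (Rabs k) / Rabs k.
Proof.
  intros Hk.
  assert (E : (exp k - exp (- k)) / k = (exp (Rabs k) - exp (- Rabs k)) / Rabs k).
  { destruct (Rcase_abs k) as [Hn|Hp].
    - rewrite (Rabs_left k Hn), Ropp_involutive; field; auto.
    - rewrite (Rabs_right k Hp); reflexivity. }
  rewrite E; pose proof (Rabs_pos_lt k Hk); pose proof (exp_pos (- Rabs k)).
  apply Rmult_le_compat_r; [apply Rlt_le, Rinv_0_lt_compat; auto | lra].
Qed.

Definition gnum_int (m1 m2 : nat) (r : R) (d : nat) (k : R) : R :=
  RInt (fun t => gnum m1 m2 t k * pp r d t) (-1) 1.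

(* Partial derivative of [gnum m1 m2 t k] in [k]; at [k = 0] it is [g m1 m2 t 0]. *)
Definition gnum_dk (m1 m2 : nat) (t k : R) : R :=
  - (/ INR m1 + / INR m2) * t * exp (- k * t) - (exp k / INR m1 - exp (- k) / INR m2).

Section Balance.

Variables (m1 m2 : nat) (r : R) (d : nat).
Hypotheses (hm1 : (0 < m1)%nat) (hm2 : (0 < m2)%nat) (hr : Rabs r < 1).

Let INR_m1_pos : 0 < INR m1. Proof. apply lt_0_INR; lia. Qed.
Let INR_m2_pos : 0 < INR m2. Proof. apply lt_0_INR; lia. Qed.

Let integrand_continuous k :
  forall t, continuous (fun t => gnum m1 m2 t k * pp r d t) t.
Proof.
  apply smooth_continuous; intros n.
  apply derivable_n_mult; [apply gnum_smooth | apply pp_smooth].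
Qed.

Lemma gnum_int_derive k :
  is_derive (gnum_int m1 m2 r d) k (RInt (fun t => gnum_dk m1 m2 t k * pp r d t) (-1) 1).
Proof.
  assert (HD : forall u v, Derive (fun z => gnum m1 m2 v z * pp r d v) u
                           = gnum_dk m1 m2 v u * pp r d v).
  { intros u v; apply is_derive_unique; unfold gnum, gnum_dk.
    auto_derive; [auto | field; lra]. }
  unfold gnum_int; erewrite RInt_ext.
  2: { intros t _; symmetry; apply HD. }
  apply (is_derive_RInt_param (fun u t => gnum m1 m2 t u * pp r d t)).
  - apply filter_forall; intros u t _; unfold gnum; auto_derive; auto.
  - intros t _.
    apply (continuity_2d_pt_ext (fun u v => gnum_dk m1 m2 v u * pp r d v));
      [intros; symmetry; apply HD|].
    unfold gnum_dk.
    repeat first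
      [ apply continuity_2d_pt_mult | apply continuity_2d_pt_minus | apply continuity_2d_pt_opp
      | apply continuity_2d_pt_id1 | apply continuity_2d_pt_id2 | apply continuity_2d_pt_const
      | apply (continuity_1d_2d_pt_comp exp);
          [apply derivable_continuous_pt, derivable_pt_exp|]
      | apply (continuity_1d_2d_pt_comp (pp r d) (fun _ v => v));
          [apply smooth_continuity_pt, pp_smooth|] ].
  - apply filter_forall; intros u.
    apply (ex_RInt_continuous (V := R_CompleteNormedModule)); intros t _; apply integrand_continuous.
Qed.

Lemma gnum_int_at_0 : gnum_int m1 m2 r d 0 = 0.
Proof.
  unfold gnum_int; rewrite (RInt_ext _ (fun _ => 0)).
  - rewrite RInt_const; apply Rmult_0_r.
  - intros t _; unfold gnum; rewrite Ropp_0, Rmult_0_l, exp_0.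
    R_eq; field; lra.
Qed.

Lemma gnum_int_derive_at_0 : is_derive (gnum_int m1 m2 r d) 0 (profile m1 m2 r d 0 1).
Proof.
  replace (profile m1 m2 r d 0 1) with (RInt (fun t => gnum_dk m1 m2 t 0 * pp r d t) (-1) 1).
  - apply gnum_int_derive.
  - apply RInt_ext; intros t _; unfold gnum_dk; rewrite g_0, Ropp_0, Rmult_0_l, exp_0.
    R_eq; field; lra.
Qed.

Lemma profile_at_1_neq_0 k : k <> 0 ->
  profile m1 m2 r d k 1 = 2 / (exp k - exp (- k)) * gnum_int m1 m2 r d k.
Proof.
  intros Hk; unfold profile, gnum_int.
  rewrite <- (RInt_scal (V := R_CompleteNormedModule)).
  - apply RInt_ext; intros t _; rewrite g_neq_0 by auto.
    change (scal ?x ?y) with (x * y).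
    R_eq; field; apply sinh_neq_0, Hk.
  - apply (ex_RInt_continuous (V := R_CompleteNormedModule)); intros t _; apply integrand_continuous.
Qed.

Let exp_pp_continuous k : forall t, continuous (fun t => exp (- k * t) * pp r d t) t.
Proof.
  apply smooth_continuous; intros n.
  apply derivable_n_mult; [apply derivable_n_exp_scal | apply pp_smooth].
Qed.

Let pp_continuous : forall t, continuous (pp r d) t.
Proof. apply smooth_continuous, pp_smooth. Qed.

Lemma gnum_int_split k : gnum_int m1 m2 r d k =
  (/ INR m1 + / INR m2) * RInt (fun t => exp (- k * t) * pp r d t) (-1) 1
  - (exp k / INR m1 + exp (- k) / INR m2) * RInt (pp r d) (-1) 1.
Proof.
  assert (Hex : forall f, (forall t, continuous f t) -> ex_RInt f (-1) 1)
    by (intros f Hf; apply (ex_RInt_continuous (V := R_CompleteNormedModule)); auto).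
  unfold gnum_int.
  rewrite <- !(RInt_scal (V := R_CompleteNormedModule)) by auto.
  rewrite <- (RInt_minus (V := R_CompleteNormedModule))
    by (apply (ex_RInt_scal (V := R_CompleteNormedModule)); auto).
  apply RInt_ext; intros t _; unfold gnum.
  change (minus ?x ?y) with (x - y); change (scal ?x ?y) with (x * y).
  R_eq; ring.
Qed.

Lemma exp_moment_le k : k <> 0 ->
  RInt (fun t => exp (- k * t) * pp r d t) (-1) 1 <= 2 ^ d * (exp (Rabs k) / Rabs k).
Proof.
  intros Hk.
  assert (Hexp : ex_RInt (fun t => exp (- k * t)) (-1) 1).
  { apply ex_RInt_Reals_1, continuity_implies_RiemannInt; [lra|].
    intros; apply derivable_continuous_pt; reg. }
  apply (Rle_trans _ (RInt (fun t => 2 ^ d * exp (- k * t)) (-1) 1)).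
  - apply RInt_le; [lra | | apply (ex_RInt_scal (V := R_CompleteNormedModule)); auto |].
    + apply (ex_RInt_continuous (V := R_CompleteNormedModule)); auto.
    + intros t Ht; rewrite (Rmult_comm (2 ^ d)).
      apply Rmult_le_compat_l; [apply Rlt_le, exp_pos | apply pp_le; auto; lra].
  - rewrite (RInt_scal (V := R_CompleteNormedModule)) by auto.
    change (scal ?x ?y) with (x * y).
    rewrite RInt_exp_scal by auto.
    apply Rmult_le_compat_l; [apply pow_le; lra | apply sinh_div_le, Hk].
Qed.

Lemma gnum_int_eventually_neg : exists K, forall k, K <= Rabs k -> gnum_int m1 m2 r d k < 0.
Proof.
  set (a := / INR m1); set (b := / INR m2).
  assert (Ha : 0 < a) by (apply Rinv_0_lt_compat; auto).
  assert (Hb : 0 < b) by (apply Rinv_0_lt_compat; auto).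
  set (c := Rmin a b); assert (Hc : 0 < c) by (apply Rmin_pos; auto).
  set (M := 2 ^ d); assert (HM : 0 < M) by (apply pow_lt; lra).
  set (P := RInt (pp r d) (-1) 1).
  assert (HP : 0 < P) by (apply RInt_gt_0; [lra | intros; apply pp_pos; auto; lra | auto]).
  exists ((a + b) * M / (c * P) + 1); intros k Hk.
  set (s := Rabs k) in *.
  assert (Hs : (a + b) * M < s * (c * P)).
  { assert (Hk' : (a + b) * M / (c * P) < s) by lra.
    apply (Rmult_lt_compat_r (c * P)) in Hk'; [|apply Rmult_lt_0_compat; auto].
    replace ((a + b) * M / (c * P) * (c * P)) with ((a + b) * M) in Hk'
      by (field; split; apply Rgt_not_eq; auto).
    lra. }
  assert (Hs0 : 0 < s) by (pose proof (Rmult_lt_0_compat c P Hc HP); nra).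
  assert (Hk0 : k <> 0) by (intros ->; unfold s in Hs0; rewrite Rabs_R0 in Hs0; lra).
  pose proof (exp_pos s) as Hes; pose proof (exp_pos k) as Hek; pose proof (exp_pos (- k)) as Hemk.
  assert (Hmix : c * exp s <= a * exp k + b * exp (- k)).
  { unfold s, c; destruct (Rcase_abs k) as [Hn|Hp].
    - rewrite (Rabs_left k Hn); pose proof (Rmin_r a b); nra.
    - rewrite (Rabs_right k Hp); pose proof (Rmin_l a b); nra. }
  rewrite gnum_int_split; fold P.
  pose proof (exp_moment_le k Hk0) as HX; fold M s in HX.
  set (X := RInt (fun t => exp (- k * t) * pp r d t) (-1) 1) in *.
  assert (H1 : (a + b) * X <= (a + b) * M * (exp s / s))
    by (rewrite Rmult_assoc; apply Rmult_le_compat_l; lra).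
  assert (H2 : (a + b) * M * (exp s / s) < c * P * exp s).
  { replace (c * P * exp s) with (s * (c * P) * (exp s / s)) by (field; lra).
    apply Rmult_lt_compat_r; [apply Rdiv_lt_0_compat|]; auto. }
  replace (exp k / INR m1 + exp (- k) / INR m2) with (a * exp k + b * exp (- k))
    by (unfold a, b, Rdiv; ring).
  fold a b; nra.
Qed.

Lemma profile_balanced_exists : exists k, profile m1 m2 r d k 1 = 0.
Proof.
  destruct gnum_int_eventually_neg as [K HK].
  set (N := gnum_int m1 m2 r d) in *.
  assert (HNc : continuity N).
  { intros k; apply continuity_pt_filterlim, (ex_derive_continuous N).
    eexists; apply gnum_int_derive. }
  assert (HNd : is_derive N 0 (profile m1 m2 r d 0 1)) by apply gnum_int_derive_at_0.
  assert (HN0 : N 0 = 0) by apply gnum_int_at_0.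
  destruct (Rtotal_order (profile m1 m2 r d 0 1) 0) as [Hneg|[Hz|Hpos]].
  - destruct (root_after_positive_slope (fun k => N (- k)) (- profile m1 m2 r d 0 1) K)
      as [k [Hk HNk]].
    + intros x; apply (continuity_pt_comp Ropp N); [apply continuity_pt_opp, continuity_pt_id | apply HNc].
    + rewrite Ropp_0; exact HN0.
    + apply is_derive_Reals.
      replace (- profile m1 m2 r d 0 1) with (scal (-1) (profile m1 m2 r d 0 1))
        by (change (scal ?x ?y) with (x * y); R_eq; ring).
      apply (is_derive_comp N Ropp); [rewrite Ropp_0; exact HNd|].
      auto_derive; [auto | ring].
    + lra.
    + intros x Hx; apply HK; rewrite Rabs_Ropp; eapply Rle_trans; [exact Hx | apply Rle_abs].
    + exists (- k); rewrite profile_at_1_neq_0 by lra; fold N; rewrite HNk; ring.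
  - exists 0; exact Hz.
  - destruct (root_after_positive_slope N (profile m1 m2 r d 0 1) K) as [k [Hk HNk]]; auto.
    + apply is_derive_Reals, HNd.
    + intros x Hx; apply HK; eapply Rle_trans; [exact Hx | apply Rle_abs].
    + exists k; rewrite profile_at_1_neq_0 by lra; fold N; rewrite HNk; ring.
Qed.

End Balance.

Lemma smooth_on_antiderivative (F G : R -> R) (a b : R) :
  (forall x, derivable_pt_lim F x (G x)) -> smooth G -> smooth_on F a b.
Proof.
  intros HF HG.
  exists (fun n => match n with O => F | S n => Derive_n G n end); split; auto.
  intros [|n] x _; [apply HF | apply smooth_Derive_n, HG].
Qed.

Lemma RInt_is_derive (G : R -> R) (a : R) :
  (forall x, continuous G x) -> forall x, derivable_pt_lim (fun z => RInt G a z) x (G x).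
Proof.
  intros HG x; apply is_derive_Reals, (is_derive_RInt G _ a); auto.
  apply filter_forall; intros y; apply (RInt_correct (V := R_CompleteNormedModule)).
  apply (ex_RInt_continuous (V := R_CompleteNormedModule)); auto.
Qed.

Section Profile.

Variables (m1 m2 : nat) (r : R) (d : nat) (k : R).
Hypotheses (hm1 : (0 < m1)%nat) (hm2 : (0 < m2)%nat) (hr : Rabs r < 1).
Hypothesis balanced : profile m1 m2 r d k 1 = 0.

Let G t := g m1 m2 t k * pp r d t.
Let F := profile m1 m2 r d k.

Let G_smooth : smooth G.
Proof. apply g_pp_smooth; auto. Qed.

Let G_continuous : forall t, continuous G t.
Proof. apply smooth_continuous, G_smooth. Qed.

Lemma profile_pos z : -1 < z < 1 -> F z > 0.
Proof.
  intros Hz; apply Rlt_gt.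
  destruct (Rle_or_lt 0 (g m1 m2 z k)) as [Hg|Hg].
  - apply RInt_gt_0; [lra | | intros; auto].
    intros x Hx; apply Rmult_lt_0_compat; [|apply pp_pos; auto; lra].
    pose proof (g_decreasing m1 m2 hm1 hm2 k x z (proj2 Hx)); lra.
  - assert (Hex : forall a b, ex_RInt G a b)
      by (intros; apply (ex_RInt_continuous (V := R_CompleteNormedModule)); auto).
    assert (Htail : RInt G z 1 < 0).
    { apply (Rlt_le_trans _ (RInt (fun _ => 0) z 1)).
      - apply RInt_lt; [lra | intros; apply continuous_const | intros; auto |].
        intros x Hx; unfold G.
        pose proof (g_decreasing m1 m2 hm1 hm2 k z x (proj1 Hx)).
        pose proof (pp_pos r d x hr ltac:(lra)); nra.
      - rewrite RInt_const; apply Req_le, Rmult_0_r. }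
    pose proof (RInt_Chasles G (-1) z 1 (Hex _ _) (Hex _ _)) as HC.
    change (RInt G (-1) z + RInt G z 1 = profile m1 m2 r d k 1) in HC.
    unfold F, profile; fold G; lra.
Qed.

Lemma profile_derive t : derivable_pt_lim F t (G t).
Proof. apply RInt_is_derive, G_continuous. Qed.

Lemma profile_smooth_on : smooth_on F (-1) 1.
Proof. apply (smooth_on_antiderivative F G); [apply profile_derive | apply G_smooth]. Qed.

Lemma profile_at_neg1 : F (-1) = 0.
Proof. exact (RInt_point (V := R_CompleteNormedModule) (-1) G). Qed.

Lemma profile_at_1 : F 1 = 0.
Proof. exact balanced. Qed.

Lemma profile_slope_at_neg1 : derivable_pt_lim F (-1) (2 * pp r d (-1) / INR m2).
Proof.
  replace (2 * pp r d (-1) / INR m2) with (G (-1)); [apply profile_derive|].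
  unfold G; rewrite g_at_neg1 by auto; unfold Rdiv; ring.
Qed.

Lemma profile_slope_at_1 : derivable_pt_lim F 1 (- (2 * pp r d 1 / INR m1)).
Proof.
  replace (- (2 * pp r d 1 / INR m1)) with (G 1); [apply profile_derive|].
  unfold G; rewrite g_at_1 by auto; unfold Rdiv; ring.
Qed.

Lemma profile_slope_ratio_derive_neg z : -1 <= z <= 1 ->
  exists l, derivable_pt_lim (fun t => G t / pp r d t) z l /\ l < 0.
Proof.
  intros Hz; destruct (g_derive_neg m1 m2 hm1 hm2 k) as [dg [Hdg Hneg]].
  destruct (pp_smooth r d 1%nat) as [dp [Hdp _]].
  pose proof (pp_pos r d z hr Hz) as Hp.
  exists (dg z); split; [|apply Hneg].
  assert (HG : derivable_pt_lim G z (dg z * pp r d z + g m1 m2 z k * dp z))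
    by (apply (derivable_pt_lim_mult (fun t => g m1 m2 t k)); auto).
  replace (dg z) with
    (((dg z * pp r d z + g m1 m2 z k * dp z) * pp r d z - dp z * G z) / (pp r d z)²)
    by (unfold G, Rsqr; field; lra).
  apply derivable_pt_lim_div; auto; lra.
Qed.

End Profile.

Theorem mainTheorem8 (m1 m2 : nat) (r : R) (d : nat)
  (hm1 : (0 < m1)%nat) (hm2 : (0 < m2)%nat) (hd : (0 < d)%nat)
  (hr0 : 0 < Rabs r) (hr1 : Rabs r < 1) :
  let F := FF m1 m2 r d in
  let p := pp r d in
  smooth_on F (-1) 1 /\
  (forall z, -1 < z < 1 -> F z > 0) /\
  F (-1) = 0 /\ F 1 = 0 /\
  derivable_pt_lim F (-1) (2 * p (-1) / INR m2) /\
  derivable_pt_lim F 1 (- (2 * p 1 / INR m1)) /\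
  (exists F' : R -> R,
     (forall t, derivable_pt_lim F t (F' t)) /\
     forall z, -1 <= z <= 1 ->
       exists l, derivable_pt_lim (fun t => F' t / p t) z l /\ l < 0).
Proof.
  assert (HRInt : forall k z, Defs.RInt (fun t => g m1 m2 t k * pp r d t) (-1) z
                             = profile m1 m2 r d k z)
    by (intros; apply RInt_continuous_eq, smooth_continuity_pt, g_pp_smooth; auto).
  set (k := kk m1 m2 r d).
  assert (Hk : profile m1 m2 r d k 1 = 0).
  { rewrite <- HRInt.
    apply (epsilon_spec (inhabits 0)
      (fun k => Defs.RInt (fun t => g m1 m2 t k * pp r d t) (-1) 1 = 0)).
    destruct (profile_balanced_exists m1 m2 r d hm1 hm2 hr1) as [k0 Hk0].
    exists k0; rewrite HRInt; exact Hk0. }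
  assert (EF : FF m1 m2 r d = profile m1 m2 r d k)
    by (apply functional_extensionality; intros z; apply HRInt).
  intros F p; unfold F; rewrite EF.
  repeat split.
  - apply profile_smooth_on; auto.
  - apply profile_pos; auto.
  - apply profile_at_neg1.
  - apply profile_at_1; auto.
  - apply profile_slope_at_neg1; auto.
  - apply profile_slope_at_1; auto.
  - exists (fun t => g m1 m2 t k * pp r d t); split.
    + apply profile_derive; auto.
    + apply profile_slope_ratio_derive_neg; auto.
Qed.
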